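(* Let $L$ be a post-Lie-Rinehart algebra over $R$, with anchor map $\rho$ and connection $\rhd$. Let $Z\in L$ and $X,Y_1,\dots,Y_n\in L$. Then \[ \bigl(Y_1\rhd(Y_2\rhd(\cdots(Y_n\rhd\delta X)\cdots))\bigr)(Z)=(Y_1\ast\cdots\ast Y_n)Z\rhd X, \] where $(Y_1\ast\cdots\ast Y_n)Z\in U(L)$ is a product in $U(L)$, the right-hand $\rhd$ is the Guin--Oudom extension $U(L)\otimes L\to L$, and $\ast$ is the Grossman--Larson product.
   Context: Let $R$ be a commutative unital algebra. A Lie-Rinehart algebra over $R$ is an $R$-module $L$ with a Lie bracket $\llbracket\cdot,\cdot\rrbracket$ and an $R$-linear Lie morphism $\rho:L\to\mathrm{Der}(R)$ with $\llbracket X,fY\rrbracket=(\rho(X)f)Y+f\llbracket X,Y\rrbracket$. A connection is a map $(X,Y)\mapsto X\rhd Y$, $R$-linear in $X$, with $X\rhd(fY)=(\rho(X)f)Y+fX\rhd Y$. Its torsion is $T(X,Y)=X\rhd Y-Y\rhd X-\llbracket X,Y\rrbracket$ and its curvature is $\mathcal{R}(X,Y,Z)=X\rhd(Y\rhd Z)-Y\rhd(X\rhd Z)-\llbracket X,Y\rrbracket\rhd Z$. A post-Lie-Rinehart algebra is a Lie-Rinehart algebra with a connection that is flat ($\mathcal{R}=0$) and has constant torsion ($X\rhd T(Y,Z)=T(X\rhd Y,Z)+T(Y,X\rhd Z)$). With $[X,Y]:=-T(X,Y)$, $(L,[\cdot,\cdot],\rhd)$ is a post-Lie algebra. The connection extends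 to $\mathrm{Hom}_R(L)$ by $(X\rhd u)(Y)=X\rhd u(Y)-u(X\rhd Y)$, and $\delta X(Z):=Z\rhd X$. $U(L)$ is the universal enveloping algebra of the Lie algebra $(L,[\cdot,\cdot])$ over the ground field. It is a Hopf algebra with concatenation product and the coproduct $\Delta(A)=A_{(1)}\otimes A_{(2)}$ (Sweedler notation) determined by $\Delta(x)=x\otimes1+1\otimes x$ for $x\in L$ and being an algebra morphism. The Guin--Oudom extension of $\rhd$ to $U(L)\otimes U(L)\to U(L)$ is the unique extension satisfying, for $A,B,C\in U(L)$ and $x\in L$: \[ 1\rhd A=A,\qquad xA\rhd B=x\rhd(A\rhd B)-(x\rhd A)\rhd B,\qquad A\rhd BC=(A_{(1)}\rhd B)(A_{(2)}\rhd C). \] In particular, for $y\in L$, \[ x_1\cdots x_k\rhd y=x_1\rhd(x_2\cdots x_k\rhd y)-\sum_{i=2}^k x_2\cdots x_{i-1}(x_1\rhd x_i)x_{i+1}\cdots x_k\rhd y. \] The Grossman--Larson product is $A\ast B=A_{(1)}(A_{(2)}\rhd B)$. *)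

From HB Require Import structures.
From mathcomp Require Import all_boot all_order all_algebra.
Set Implicit Arguments. Unset Strict Implicit. Unset Printing Implicit Defensive.
Import Order.TTheory GRing.Theory Num.Theory.
Local Open Scope ring_scope.

Section PostLieRinehart.
Variables (k : fieldType) (R : comAlgType k) (L : lmodType R).

Definition is_derivation (D : R -> R) : Prop :=
  (forall (c : k) (a b : R), D (c *: a + b) = c *: D a + D b) /\
  (forall a b : R, D (a * b) = D a * b + a * D b).

Definition is_lie_bracket (br : L -> L -> L) : Prop :=
  (forall (c : k) (x x' y : L), br ((c%:A : R) *: x + x') y = (c%:A : R) *: br x y + br x' y) /\
  (forall (c : k) (x y y' : L), br x ((c%:A : R) *: y + y') = (c%:A : R) *: br x y + br x y') /\
  (forall x : L, br x x = 0) /\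
  (forall x y z : L, br x (br y z) + br y (br z x) + br z (br x y) = 0).

Definition is_lie_rinehart (br : L -> L -> L) (rho : L -> R -> R) : Prop :=
  [/\ is_lie_bracket br,
      (forall X, is_derivation (rho X)),
      (forall (f : R) (X Y : L) (a : R), rho (f *: X + Y) a = f * rho X a + rho Y a),
      (forall (X Y : L) (a : R), rho (br X Y) a = rho X (rho Y a) - rho Y (rho X a)) &
      (forall (X Y : L) (f : R), br X (f *: Y) = rho X f *: Y + f *: br X Y)].

Definition is_connection (rho : L -> R -> R) (tri : L -> L -> L) : Prop :=
  [/\ (forall (f : R) (X X' Y : L), tri (f *: X + X') Y = f *: tri X Y + tri X' Y),
      (forall (X Y Y' : L), tri X (Y + Y') = tri X Y + tri X Y') &
      (forall (X Y : L) (f : R), tri X (f *: Y) = rho X f *: Y + f *: tri X Y)].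

Definition torsion (br tri : L -> L -> L) (X Y : L) : L :=
  tri X Y - tri Y X - br X Y.

Definition curvature (br tri : L -> L -> L) (X Y Z : L) : L :=
  tri X (tri Y Z) - tri Y (tri X Z) - tri (br X Y) Z.

(** Post-Lie-Rinehart algebra: flat connection with constant torsion. *)
Definition is_post_lie_rinehart (br : L -> L -> L) (rho : L -> R -> R)
    (tri : L -> L -> L) : Prop :=
  [/\ is_lie_rinehart br rho, is_connection rho tri,
      (forall X Y Z, curvature br tri X Y Z = 0) &
      (forall X Y Z, tri X (torsion br tri Y Z)
                     = torsion br tri (tri X Y) Z + torsion br tri Y (tri X Z))].

Definition hom_act (tri : L -> L -> L) (X : L) (u : L -> L) : L -> L :=
  fun Y => tri X (u Y) - u (tri X Y).

Definition delta (tri : L -> L -> L) (X : L) : L -> L := fun Z => tri Z X.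

(** Elements of U(L) are represented by (lifts to) the tensor algebra: a word
    [:: x1; ...; xk] : seq L stands for the product x1 ... xk, and a
    seq (seq L) stands for the formal sum of its words.  *)

(** Guin--Oudom extension on words: x1...xk |> y, via the recursion
    x1...xk |> y = x1 |> (x2...xk |> y)
                   - sum_{i=2}^k x2...(x1 |> xi)...xk |> y.
    (n is fuel; word_act uses n = size of the word.) *)
Fixpoint wact (tri : L -> L -> L) (n : nat) (w : seq L) (y : L) : L :=
  match n, w with
  | _, [::] => y
  | 0, _ => y
  | n'.+1, x :: w' =>
      tri x (wact tri n' w' y)
      - \sum_(i < size w') wact tri n' (set_nth 0 w' i (tri x (nth 0 w' i))) y
  end.

Definition word_act (tri : L -> L -> L) (w : seq L) (y : L) : L :=
  wact tri (size w) w y.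

Definition sum_act (tri : L -> L -> L) (s : seq (seq L)) (y : L) : L :=
  \sum_(w <- s) word_act tri w y.

(** All ways of distributing the letters of A (keeping their order) into
    m+1 slots: slot 0 (the first component) and m further slots. This is the
    iterated coproduct Delta^{(m)}(A) for the unshuffle coproduct. *)
Fixpoint distrib (A : seq L) (m : nat) : seq (seq L * seq (seq L)) :=
  match A with
  | [::] => [:: ([::], nseq m [::])]
  | a :: A' =>
      flatten [seq (a :: p.1, p.2)
                   :: [seq (p.1, set_nth [::] p.2 j (a :: nth [::] p.2 j))
                      | j <- iota 0 m]
              | p <- distrib A' m]
  end.

(** Grossman--Larson product of two words:
    A * (b1...bm) = A_(1) (A_(2) |> b1...bm)
                  = sum A_(1) (A_(2) |> b1) ... (A_(m+1) |> bm). *)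
Definition gl_word (tri : L -> L -> L) (A B : seq L) : seq (seq L) :=
  [seq p.1 ++ [seq word_act tri (nth [::] p.2 j) (nth 0 B j) | j <- iota 0 (size B)]
  | p <- distrib A (size B)].

Definition gl (tri : L -> L -> L) (s t : seq (seq L)) : seq (seq L) :=
  flatten [seq gl_word tri a b | a <- s, b <- t].

(** Iterated GL product Y1 * (Y2 * (... * Yn)); the empty product is 1. *)
Definition gl_prod (tri : L -> L -> L) (Ys : seq L) : seq (seq L) :=
  foldr (fun Y s => gl tri [:: [:: Y]] s) [:: [::]] Ys.

Definition mulr_word (s : seq (seq L)) (Z : L) : seq (seq L) :=
  [seq rcons w Z | w <- s].

End PostLieRinehart.

(* The Grossman--Larson product of a letter Y with a word B is Y B plus the
   sum of the words obtained from B by applying Y |> to one of its letters.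
   Hence the Guin--Oudom recursion for the word Y B Z, whose last correction
   term is the one where Y |> hits Z, reads
     (Y * B) Z |> X = Y |> (B Z |> X) - B (Y |> Z) |> X,
   which is exactly the recursion (Y |> u)(Z) = Y |> u(Z) - u(Y |> Z) obeyed
   by the left-hand side; induction on the number of Y's concludes. *)

From HB Require Import structures.
From mathcomp Require Import all_boot all_order all_algebra.
Import GRing.Theory.
Local Open Scope ring_scope.

Set Implicit Arguments.
Unset Strict Implicit.

Section SetNthRcons.
Variables (T : Type) (x0 : T).

Lemma set_nth_rcons (s : seq T) z i v : (i < size s)%N ->
  set_nth x0 (rcons s z) i v = rcons (set_nth x0 s i v) z.
Proof. by elim: s i => [|x s IHs] [|i] //= /IHs ->. Qed.

Lemma set_nth_rcons_size (s : seq T) z v :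
  set_nth x0 (rcons s z) (size s) v = rcons s v.
Proof. by elim: s => //= x s ->. Qed.

End SetNthRcons.

Section GuinOudomLetter.
Variables (k : fieldType) (R : comAlgType k) (L : lmodType R).
Variable tri : L -> L -> L.
Hypothesis triD : forall X Y Y' : L, tri X (Y + Y') = tri X Y + tri X Y'.

Lemma tri0r X : tri X 0 = 0.
Proof. by apply: (@addrI _ (tri X 0)); rewrite -triD !addr0. Qed.

Lemma word_act_cons x w y : word_act tri (x :: w) y =
  tri x (word_act tri w y)
  - \sum_(i < size w) word_act tri (set_nth 0 w i (tri x (nth 0 w i))) y.
Proof.
rewrite /word_act /=; congr (_ - _); apply: eq_bigr => i _.
by rewrite size_set_nth (maxn_idPr _) ?ltn_ord.
Qed.

Lemma word_act1 x y : word_act tri [:: x] y = tri x y.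
Proof. by rewrite word_act_cons big_ord0 subr0. Qed.

Lemma gl_word1l Y B : gl_word tri [:: Y] B =
  (Y :: B) :: [seq set_nth 0 B j (tri Y (nth 0 B j)) | j <- iota 0 (size B)].
Proof.
rewrite /gl_word /= cats0 /=; congr ((_ :: _) :: _).
  rewrite -[RHS](mkseq_nth 0); apply: eq_map => j.
  by rewrite nth_nseq if_same.
rewrite -map_comp; apply/eq_in_map => j; rewrite mem_iota => /andP[_ ltjB] /=.
apply: (@eq_from_nth _ 0) => [|i].
  by rewrite size_map size_iota size_set_nth (maxn_idPr _).
rewrite size_map size_iota => ltiB.
rewrite (nth_map 0%N) ?size_iota // nth_iota // !nth_set_nth /= !nth_nseq !if_same.
by case: eqP => [->|_]; rewrite ?word_act1.
Qed.

Lemma sum_act_mulr_word s Z X :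
  sum_act tri (mulr_word s Z) X = \sum_(w <- s) word_act tri (rcons w Z) X.
Proof. by rewrite /sum_act /mulr_word big_map. Qed.

Lemma sum_act_gl_word1l Y B Z X :
  \sum_(w <- gl_word tri [:: Y] B) word_act tri (rcons w Z) X
  = tri Y (word_act tri (rcons B Z) X) - word_act tri (rcons B (tri Y Z)) X.
Proof.
rewrite gl_word1l big_cons big_map rcons_cons word_act_cons size_rcons.
rewrite big_ord_recr /= nth_rcons ltnn eqxx set_nth_rcons_size.
have -> : \sum_(i < size B) word_act tri
      (set_nth 0 (rcons B Z) i (tri Y (nth 0 (rcons B Z) i))) X
    = \sum_(j <- iota 0 (size B))
      word_act tri (rcons (set_nth 0 B j (tri Y (nth 0 B j))) Z) X.
  rewrite -[in RHS](subn0 (size B)) big_mkord.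
  by apply: eq_bigr => i _; rewrite nth_rcons ltn_ord set_nth_rcons.
by rewrite opprD addrA addrAC subrK.
Qed.

Lemma sum_act_gl1l Y s Z X :
  sum_act tri (mulr_word (gl tri [:: [:: Y]] s) Z) X
  = tri Y (sum_act tri (mulr_word s Z) X) - sum_act tri (mulr_word s (tri Y Z)) X.
Proof.
rewrite !sum_act_mulr_word /gl allpairs_cons cats0 big_flatten big_map.
under eq_bigr do rewrite sum_act_gl_word1l.
by rewrite sumrB (big_morph (tri Y) (triD Y) (tri0r Y)).
Qed.

End GuinOudomLetter.

Theorem mainTheorem7 (k : fieldType) (R : comAlgType k) (L : lmodType R)
    (br : L -> L -> L) (rho : L -> R -> R) (tri : L -> L -> L) :
  is_post_lie_rinehart br rho tri ->
  forall (Z X : L) (Ys : seq L),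
    foldr (hom_act tri) (delta tri X) Ys Z
    = sum_act tri (mulr_word (gl_prod tri Ys) Z) X.
Proof.
case=> _ [_ triD _] _ _ Z X Ys.
elim: Ys Z => [|Y Ys IHYs] Z.
  by rewrite sum_act_mulr_word big_seq1 word_act1.
by rewrite /= (sum_act_gl1l triD) -!IHYs.
Qed.
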